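(* Let $L$ be a finite lattice and $\varphi\in M_1(L)$. For $g\in R(\mathcal L)$ define $$B_\varphi(g)=\min\{\Phi(g):\Phi\in M_\infty(\mathcal L),\ \Pi(\Phi)=\varphi\},\qquad S^\varphi(g)=\max\Big\{\sum_{x\in L}r_x\varphi(x): (r_x)_{x\in L}\in\mathbb R^L,\ \sum_{x\in V}r_x\le g(V)\ \text{for all } V\in\mathcal L\Big\}.$$ Then $B_\varphi(g)=S^\varphi(g)$ for every $g\in R(\mathcal L)$.
   Context: $L$ is a finite lattice. $\mathcal L$ is the set of nonempty up-sets of $L$ (subsets $U$ with $x\in U,\ x\le y\Rightarrow y\in U$), ordered by $U\preceq V$ iff $U\supseteq V$; it is a distributive lattice with meet given by union. $R(\mathcal L)$ denotes real-valued functions on $\mathcal L$. $M_1(L)$ is the set of nonnegative monotone functions on $L$; $M_\infty(\mathcal L)$ is the set of nonnegative completely monotone functions on $(\mathcal L,\preceq)$, where completeness monotonicity means all successive differences $\nabla_{U_1,\dots,U_n}\Phi\ge0$, with $\nabla_U\Phi(W)=\Phi(W)-\Phi(W\wedge U)$ iterated. For $a\in L$, $\langle a\rangle^*=\{x: x\ge a\}$, and $\Pi(\Phi)(x)=\Phi(\langle a\rangle^* )|_{a=x}$, i.e. $\Pi(\Phi)(x)=\Phi(\langle x\rangle^* )$. For $\Phi\in M_\infty(\mathcal L)$ with Möbius inverse $F$ (the unique $F$ with $\Phi(U)=\sum_{V\preceq U}F(V)$, which is nonnegative), $\Phi(g)=\sum_{V\in\mathcal L}F(V)g(V)$. *)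

From HB Require Import structures.
From mathcomp Require Import all_boot all_order all_algebra.
From mathcomp Require Import reals.
Set Implicit Arguments. Unset Strict Implicit. Unset Printing Implicit Defensive.
Import Order.TTheory GRing.Theory Num.Theory.
Local Open Scope ring_scope.

Section Defs.
Variables (d : Order.disp_t) (T : finLatticeType d) (R : realType).

Definition is_upset (A : {set T}) : bool :=
  [forall x, forall y, (x \in A) && (x <= y)%O ==> (y \in A)].

Definition in_calL (A : {set T}) : bool := is_upset A && (A != set0).

Definition principal_up (a : T) : {set T} := [set x | (a <= x)%O].

(* nabla_U Phi (W) = Phi(W) - Phi(W /\ U), where the meet in (calL, <=) is union *)
Definition nabla (U : {set T}) (Phi : {set T} -> R) : {set T} -> R :=
  fun W => Phi W - Phi (W :|: U).

Definition nablas (s : seq {set T}) (Phi : {set T} -> R) : {set T} -> R :=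
  foldr nabla Phi s.

(* M_infty(calL): nonnegative (case s = [::]) and completely monotone *)
Definition M_infty (Phi : {set T} -> R) : Prop :=
  forall (s : seq {set T}) (W : {set T}),
    all in_calL s -> in_calL W -> 0 <= nablas s Phi W.

Definition M_1 (phi : T -> R) : Prop :=
  (forall x, 0 <= phi x) /\ (forall x y, (x <= y)%O -> phi x <= phi y).

Definition Pi (Phi : {set T} -> R) : T -> R := fun x => Phi (principal_up x).

(* Moebius inverse on (calL, <=) with V <= U iff V \supseteq U:
   F(U) = Phi(U) - sum_{V in calL, V proper superset of U} F(V);
   computed by recursion with fuel (fuel #|T| suffices). *)
Fixpoint mob_fuel (n : nat) (Phi : {set T} -> R) (U : {set T}) : R :=
  match n with
  | 0 => Phi U
  | n'.+1 => Phi U - \sum_(V : {set T} | in_calL V && (U \proper V)) mob_fuel n' Phi V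
  end.

Definition mobius (Phi : {set T} -> R) (U : {set T}) : R := mob_fuel #|T| Phi U.

Definition Phi_app (Phi : {set T} -> R) (g : {set T} -> R) : R :=
  \sum_(V : {set T} | in_calL V) mobius Phi V * g V.

Definition B_feasible (phi : T -> R) (Phi : {set T} -> R) : Prop :=
  M_infty Phi /\ (forall x, Pi Phi x = phi x).

Definition S_feasible (g : {set T} -> R) (r : T -> R) : Prop :=
  forall V, in_calL V -> \sum_(x in V) r x <= g V.

Definition S_obj (phi : T -> R) (r : T -> R) : R := \sum_(x : T) r x * phi x.

End Defs.

From HB Require Import structures.
From mathcomp Require Import all_boot all_order all_algebra.
From mathcomp Require Import reals.
From mathcomp Require Import lra.
Set Implicit Arguments. Unset Strict Implicit. Unset Printing Implicit Defensive.
Import Order.TTheory GRing.Theory Num.Theory.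
Local Open Scope ring_scope.

(* B_phi(g) and S^phi(g) are the values of a primal/dual pair of finite linear
   programs. Moebius inversion over the nonempty up-sets identifies the feasible
   Phi with the zeta transforms of nonnegative weights F such that
   phi x = \sum_(V \ni x) F V, and then Phi(g) = \sum_V F V * g V; weak duality
   is an exchange of summations. Every phi in M_1 admits such weights (layer-cake
   decomposition along its positive support), and Farkas' lemma, proved by
   Fourier-Motzkin elimination, applied to the system "primal feasible, dual
   feasible, no duality gap" gives strong duality. *)

Section Farkas.
Variables (R : realFieldType) (X : finType).

Local Notation row := ((X -> R) * R)%type.

Inductive cone (I : finType) (c : I -> row) : row -> Prop :=
| cone_in i : cone c (c i)
| cone0 : cone c (fun _ => 0, 0)
| coneD a1 b1 a2 b2 : cone c (a1, b1) -> cone c (a2, b2) ->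
    cone c (fun j => a1 j + a2 j, b1 + b2)
| coneZ k a b : 0 <= k -> cone c (a, b) -> cone c (fun j => k * a j, k * b).

Lemma cone_row (I : finType) (c : I -> row) i : cone c ((c i).1, (c i).2).
Proof. by rewrite -surjective_pairing; apply: cone_in. Qed.

Lemma cone_trans (I J : finType) (c : I -> row) (c' : J -> row) v :
  (forall j, cone c (c' j)) -> cone c' v -> cone c v.
Proof.
move=> c'c; elim=> // *; [exact: cone0 | exact: coneD | exact: coneZ].
Qed.

Lemma cone_coef0 (I : finType) (c : I -> row) j v :
  (forall i, (c i).1 j = 0) -> cone c v -> v.1 j = 0.
Proof.
move=> c0; elim=> //= [a1 b1 a2 b2 _ -> _ ->|k a b _ _ ->].
  by rewrite addr0.
by rewrite mulr0.
Qed.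

Lemma cone_multipliers (I : finType) (c : I -> row) v : cone c v ->
  exists l : I -> R, (forall i, 0 <= l i) /\
    (forall j, v.1 j = \sum_i l i * (c i).1 j) /\ v.2 = \sum_i l i * (c i).2.
Proof.
elim=> [i|||].
- exists (fun k => (k == i)%:R); split=> [k|]; first exact: ler0n.
  have pick f : f i = \sum_k (k == i)%:R * f k.
    by rewrite (bigD1 i) //= eqxx mul1r big1 ?addr0 // => k /negbTE->; rewrite mul0r.
  by split=> [j|]; apply: pick.
- exists (fun _ => 0); split=> //.
  by split=> [j|] /=; rewrite big1 // => k _; rewrite mul0r.
- move=> a1 b1 a2 b2 _ [l1 [l1_ge0]] /= [e1 f1] _ [l2 [l2_ge0]] /= [e2 f2].
  exists (fun k => l1 k + l2 k); split=> [k|]; first by rewrite addr_ge0.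
  split=> [j|] /=; rewrite ?e1 ?e2 ?f1 ?f2 -big_split /=;
    by apply: eq_bigr => k _; rewrite mulrDl.
- move=> k a b k_ge0 _ [l [l_ge0]] /= [e f].
  exists (fun i => k * l i); split=> [i|]; first by rewrite mulr_ge0.
  split=> [j|] /=; rewrite ?e ?f big_distrr /=;
    by apply: eq_bigr => i _; rewrite mulrA.
Qed.

Definition solvable_on (I : finType) (c : I -> row) (D : {set X}) :=
  exists z : X -> R, forall i, \sum_(j in D) (c i).1 j * z j <= (c i).2.

(* One Fourier-Motzkin step: every pair of rows with coefficients of opposite
   signs at x0 is combined so that x0 cancels, rows not involving x0 are kept,
   and all other indices carry the trivial row 0 <= 0. *)
Definition fm_elim (I : finType) (c : I -> row) (x0 : X) : (I * I + I)%type -> row :=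
  fun k => match k with
  | inl (i, i') =>
      if (0 < (c i).1 x0) && ((c i').1 x0 < 0) then
        (fun j => - (c i').1 x0 * (c i).1 j + (c i).1 x0 * (c i').1 j,
         - (c i').1 x0 * (c i).2 + (c i).1 x0 * (c i').2)
      else (fun _ => 0, 0)
  | inr i => if (c i).1 x0 == 0 then c i else (fun _ => 0, 0)
  end.

Lemma fm_elim_cone (I : finType) (c : I -> row) x0 k : cone c (fm_elim c x0 k).
Proof.
case: k => [[i i']|i] /=; last by case: ifP => _; [apply: cone_in | apply: cone0].
case: ifP => [/andP[pos neg]|_]; last exact: cone0.
by apply: coneD; apply: coneZ; rewrite ?oppr_ge0 ?ltW //; apply: cone_row.
Qed.

Lemma fm_elim_coef0 (I : finType) (c : I -> row) x0 k : (fm_elim c x0 k).1 x0 = 0.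
Proof.
case: k => [[i i']|i] /=; last by case: ifP => [/eqP|].
by case: ifP => _ //=; rewrite mulNr mulrC addNr.
Qed.

Lemma separating_point (ls us : seq R) :
  (forall l u, l \in ls -> u \in us -> l <= u) ->
  exists t, {in ls, forall l, l <= t} /\ {in us, forall u, t <= u}.
Proof.
elim: ls => [|l ls IH] lu.
  exists (foldr Num.min 0 us); split=> // u; elim: us {lu} => //= v us IHus.
  by rewrite inE => /orP[/eqP->|/IHus]; rewrite ge_min ?lexx // => ->; rewrite orbT.
have [|t [ls_t t_us]] := IH; first by move=> l' u l'ls; apply: lu; rewrite inE l'ls orbT.
exists (Num.max l t); split=> [l'|u us_u]; last by rewrite ge_max t_us // lu ?mem_head.
by rewrite inE le_max => /orP[/eqP->|/ls_t->]; rewrite ?lexx ?orbT.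
Qed.

Lemma sum_comb (D : {set X}) (a1 a2 z : X -> R) (u v : R) :
  \sum_(j in D) (u * a1 j + v * a2 j) * z j =
  u * \sum_(j in D) a1 j * z j + v * \sum_(j in D) a2 j * z j.
Proof.
by rewrite !big_distrr -big_split /=; apply: eq_bigr => j _; rewrite mulrDl !mulrA.
Qed.

Lemma fm_elim_lift (I : finType) (c : I -> row) x0 (D : {set X}) :
  x0 \in D -> solvable_on (fm_elim c x0) (D :\ x0) -> solvable_on c D.
Proof.
move=> Dx0 [z zP].
pose s i := \sum_(j in D :\ x0) (c i).1 j * z j.
pose p i := (c i).1 x0.
pose L i := ((c i).2 - s i) / p i.
pose bounds (P : pred I) := [seq L i | i <- enum I & P i].
have boundsP (P : pred I) i : P i -> L i \in bounds P.
  by move=> Pi; apply: map_f; rewrite mem_filter Pi mem_enum.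
have [t [lo_t t_hi]] : exists t, {in bounds (fun i => p i < 0), forall l, l <= t} /\
                                 {in bounds (fun i => 0 < p i), forall u, t <= u}.
  apply: separating_point => l u /mapP[i]; rewrite mem_filter => /andP[neg _] ->.
  move=> /mapP[k]; rewrite mem_filter => /andP[pos _] ->.
  have := zP (inl (k, i)); rewrite /= pos neg /= sum_comb -/(s k) -/(s i) -/(p i) -/(p k).
  rewrite /L ler_pdivlMr // mulrAC ler_ndivrMr // => comb; nra.
exists (fun j => if j == x0 then t else z j) => i.
rewrite (big_setD1 x0 Dx0) /= eqxx.
have -> : \sum_(j in D :\ x0) (c i).1 j * (if j == x0 then t else z j) = s i.
  by apply: eq_bigr => j; rewrite in_setD1 => /andP[/negbTE-> _].
rewrite -/(p i) mulrC -lerBrDr.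
case: (ltgtP (p i) 0) => [neg|pos|p0].
- by have := lo_t _ (boundsP _ _ neg); rewrite /L ler_ndivrMr.
- by have := t_hi _ (boundsP _ _ pos); rewrite /L ler_pdivlMr.
- have := zP (inr i); rewrite /= -/(p i) p0 eqxx => si_le.
  by rewrite mulr0 subr_ge0.
Qed.

Lemma farkas_on (D : {set X}) (I : finType) (c : I -> row) :
  solvable_on c D \/
  exists a b, [/\ cone c (a, b), {in D, forall j, a j = 0} & b < 0].
Proof.
move cardD : #|D| => n; elim: n D cardD I c => [|n IH] D cardD I c.
  have -> : D = set0 by apply/eqP; rewrite -cards_eq0 cardD.
  have [b_ge0|] := boolP [forall i, 0 <= (c i).2].
    by left; exists (fun _ => 0) => i; rewrite big_set0 (forallP b_ge0).
  rewrite negb_forall => /existsP[i]; rewrite -ltNge => bi_lt0.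
  by right; exists (c i).1, (c i).2; split=> // [|j]; rewrite ?inE //; apply: cone_row.
have /card_gt0P[x0 Dx0] : (0 < #|D|)%N by rewrite cardD.
have cardD' : #|D :\ x0| = n by move: cardD; rewrite (cardsD1 x0) Dx0 add1n => -[].
have [solv|[a [b [cab a0 b_lt0]]]] := IH _ cardD' _ (fm_elim c x0).
  by left; apply: fm_elim_lift Dx0 solv.
right; exists a, b; split=> //; first exact: cone_trans (fm_elim_cone c x0) cab.
move=> j Dj; have [->|j_neq] := eqVneq j x0.
  exact: cone_coef0 (fm_elim_coef0 c x0) cab.
by apply: a0; rewrite in_setD1 j_neq.
Qed.

Lemma farkas (I : finType) (A : I -> X -> R) (b : I -> R) :
  (exists z : X -> R, forall i, \sum_j A i j * z j <= b i) \/
  (exists l : I -> R, [/\ forall i, 0 <= l i,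
     forall j, \sum_i l i * A i j = 0 & \sum_i l i * b i < 0]).
Proof.
have [[z zP]|[a [b' [cab a0 b'_lt0]]]] := farkas_on [set: X] (fun i => (A i, b i)).
  left; exists z => i; have := zP i.
  by rewrite /= (eq_bigl predT) // => j; rewrite inE.
right; have [l [l_ge0 [/= la /= lb]]] := cone_multipliers cab.
by exists l; split=> // [j|]; rewrite -?la ?a0 ?inE // -lb.
Qed.

End Farkas.

Section UpSets.
Variables (d : Order.disp_t) (T : finLatticeType d) (R : realType).
Implicit Types (x y : T) (A U V W : {set T}) (F Phi : {set T} -> R) (phi : T -> R).

Lemma mem_upset A x y : is_upset A -> x \in A -> (x <= y)%O -> y \in A.
Proof.
by move=> /forallP /(_ x) /forallP /(_ y) /implyP up Ax xy; apply: up; rewrite Ax xy.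
Qed.

Lemma closed_is_upset A : (forall x y, x \in A -> (x <= y)%O -> y \in A) -> is_upset A.
Proof.
by move=> up; apply/forallP => x; apply/forallP => y; apply/implyP => /andP[]; apply: up.
Qed.

Lemma in_calLU U V : in_calL U -> in_calL V -> in_calL (U :|: V).
Proof.
move=> /andP[upU /set0Pn[x Ux]] /andP[upV _]; apply/andP; split; last first.
  by apply/set0Pn; exists x; rewrite inE Ux.
apply: closed_is_upset => y z; rewrite !inE => /orP[] yW yz.
  by rewrite (mem_upset upU yW yz).
by rewrite (mem_upset upV yW yz) orbT.
Qed.

Lemma in_calL_principal_up x : in_calL (principal_up x).
Proof.
apply/andP; split; last by apply/set0Pn; exists x; rewrite inE.
by apply: closed_is_upset => y z; rewrite !inE; apply: le_trans.
Qed.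

Lemma principal_up_subset V x : in_calL V -> (principal_up x \subset V) = (x \in V).
Proof.
move=> /andP[upV _]; apply/idP/idP; first by move/subsetP; apply; rewrite inE.
by move=> Vx; apply/subsetP => y; rewrite inE; apply: mem_upset upV Vx.
Qed.

Definition zeta F W : R := \sum_(V | in_calL V && (W \subset V)) F V.

Lemma zeta_proper F U : in_calL U ->
  zeta F U = F U + \sum_(V | in_calL V && (U \proper V)) F V.
Proof.
move=> LU; rewrite /zeta (bigD1 U) /=; last by rewrite LU subxx.
congr (_ + _); apply: eq_bigl => V /=.
rewrite properEneq [U == V]eq_sym.
by case: (in_calL V); case: (V == U); case: (U \subset V).
Qed.

Lemma proper_card_compl U V : U \proper V -> (#|T| - #|V| < #|T| - #|U|)%N.
Proof.
move=> UV; apply: ltn_sub2l (proper_card UV).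
exact: leq_trans (proper_card UV) (max_card V).
Qed.

Lemma mob_fuel_stable Phi k U n : (#|T| - #|U| <= k)%N -> (k <= n)%N ->
  mob_fuel n Phi U = mob_fuel k Phi U.
Proof.
elim: k n U => [|k IH] [|n] U //= hk hn; last first.
  congr (_ - _); apply: eq_bigr => V /andP[_ UV]; apply: IH => //.
  by rewrite -ltnS; apply: leq_trans (proper_card_compl UV) hk.
rewrite big_pred0 ?subr0 // => V; apply/negP => /andP[_ /proper_card_compl].
by rewrite ltnNge (leq_trans hk).
Qed.

Lemma mobius_rec Phi U : in_calL U ->
  mobius Phi U = Phi U - \sum_(V | in_calL V && (U \proper V)) mobius Phi V.
Proof.
move=> /andP[_ /set0Pn[x Ux]]; rewrite /mobius.
have : (0 < #|T|)%N by apply/card_gt0P; exists x.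
case cardTn: #|T| => [//|n] _ /=; congr (_ - _); apply: eq_bigr => V /andP[_ UV].
symmetry; apply: (@mob_fuel_stable Phi n V n.+1) => //; rewrite -ltnS -cardTn.
exact: leq_trans (proper_card_compl UV) (leq_subr _ _).
Qed.

Lemma zeta_mobius Phi U : in_calL U -> Phi U = zeta (mobius Phi) U.
Proof. by move=> LU; rewrite zeta_proper // mobius_rec // subrK. Qed.

Lemma zeta_inj F G : (forall W, in_calL W -> zeta F W = zeta G W) ->
  forall U, in_calL U -> F U = G U.
Proof.
move=> eqFG U; have [k] := ubnP (#|T| - #|U|).
elim: k U => // k IH U hk LU; have := eqFG U LU; rewrite !zeta_proper //.
have -> : \sum_(V | in_calL V && (U \proper V)) F V =
          \sum_(V | in_calL V && (U \proper V)) G V.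
  apply: eq_bigr => V /andP[LV UV]; apply: IH => //.
  exact: leq_trans (proper_card_compl UV) hk.
by move/addIr.
Qed.

Lemma mobius_zeta F U : in_calL U -> mobius (zeta F) U = F U.
Proof. by apply: zeta_inj => W LW; rewrite -zeta_mobius. Qed.

Lemma nablas_zeta Phi F : (forall W, in_calL W -> Phi W = zeta F W) ->
  forall s W, all (@in_calL _ T) s -> in_calL W ->
  nablas s Phi W =
    \sum_(V | [&& in_calL V, W \subset V & all (fun U => ~~ (U \subset V)) s]) F V.
Proof.
move=> PhiE; elim=> [|U s IH] W /= Ls LW.
  by rewrite PhiE //; apply: eq_bigl => V; rewrite andbT.
move/andP: Ls => [LU Ls]; rewrite /nabla IH // IH ?in_calLU //.
rewrite [in LHS]big_mkcond [X in _ - X]big_mkcond [RHS]big_mkcond -sumrB.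
apply: eq_bigr => V _; rewrite subUset.
by case: (in_calL V); case: (W \subset V); case: (U \subset V); case: (all _ s);
  rewrite /= ?subr0 ?subrr.
Qed.

Lemma M_infty_zeta F : (forall V, in_calL V -> 0 <= F V) -> M_infty (zeta F).
Proof.
by move=> F_ge0 s W Ls LW; rewrite (nablas_zeta (F := F)) // sumr_ge0 // => V /andP[/F_ge0].
Qed.

(* One difference per point y outside U, in the direction U :|: principal_up y,
   kills every term of the expansion except F U. *)
Lemma mobius_ge0 Phi U : M_infty Phi -> in_calL U -> 0 <= mobius Phi U.
Proof.
move=> MPhi LU.
pose s := [seq U :|: principal_up y | y <- enum (~: U)].
have Ls : all (@in_calL _ T) s.
  by apply/allP => A /mapP[y _ ->]; rewrite in_calLU ?in_calL_principal_up.
have := MPhi s U Ls LU; rewrite (nablas_zeta (@zeta_mobius Phi)) //.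
rewrite (eq_bigl (pred1 U)) ?big_pred1_eq // => V /=.
apply/idP/eqP => [/and3P[LV UV allV]|->]; last first.
  rewrite LU subxx; apply/allP => A /mapP[y]; rewrite mem_enum inE => Uy ->.
  by rewrite subUset principal_up_subset // (negbTE Uy) andbF.
apply/eqP; rewrite eqEsubset UV andbT; apply/subsetP => y Vy.
apply: contraTT allV => Uy; apply/allPn; exists (U :|: principal_up y).
  by apply: map_f; rewrite mem_enum inE.
by rewrite negbK subUset UV principal_up_subset.
Qed.

Lemma Pi_zeta Phi F x : (forall W, in_calL W -> Phi W = zeta F W) ->
  Pi Phi x = \sum_(V | in_calL V && (x \in V)) F V.
Proof.
move=> PhiE; rewrite /Pi PhiE ?in_calL_principal_up //; apply: eq_bigl => V.
by case LV: (in_calL V) => //=; rewrite principal_up_subset.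
Qed.

Definition upset_decomp phi F : Prop :=
  (forall V, in_calL V -> 0 <= F V) /\
  (forall x, phi x = \sum_(V | in_calL V && (x \in V)) F V).

Lemma B_feasible_decomp phi Phi : B_feasible phi Phi -> upset_decomp phi (mobius Phi).
Proof.
move=> [MPhi PiPhi]; split=> [V|x]; first exact: mobius_ge0.
by rewrite -PiPhi (Pi_zeta _ (@zeta_mobius Phi)).
Qed.

Lemma zeta_B_feasible phi F : upset_decomp phi F -> B_feasible phi (zeta F).
Proof.
by move=> [F_ge0 phiE]; split=> [|x]; [apply: M_infty_zeta | rewrite phiE; apply: Pi_zeta].
Qed.

Lemma Phi_app_zeta F g : Phi_app (zeta F) g = \sum_(V | in_calL V) F V * g V.
Proof. by apply: eq_bigr => V LV; rewrite mobius_zeta. Qed.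

Lemma S_obj_le_decomp phi F g r : upset_decomp phi F -> S_feasible g r ->
  S_obj phi r <= \sum_(V | in_calL V) F V * g V.
Proof.
move=> [F_ge0 phiE] r_feas.
have -> : S_obj phi r = \sum_(V | in_calL V) F V * \sum_(x in V) r x.
  rewrite /S_obj; under eq_bigr => x _ do rewrite phiE big_distrr big_mkcond /=.
  rewrite exchange_big [RHS]big_mkcond; apply: eq_bigr => V _ /=.
  case: (in_calL V); last by rewrite big1.
  rewrite big_distrr [RHS]big_mkcond; apply: eq_bigr => x _.
  by case: (x \in V); rewrite ?mulr0 // mulrC.
by apply: ler_sum => V LV; rewrite ler_wpM2l ?F_ge0 ?r_feas.
Qed.

Lemma upset_decomp0 phi : (forall x, phi x = 0) -> upset_decomp phi (fun _ => 0).
Proof. by move=> phi0; split=> // x; rewrite phi0 big1. Qed.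

Lemma upset_decompD phi F S m : upset_decomp phi F -> in_calL S -> 0 <= m ->
  upset_decomp (fun x => phi x + (if x \in S then m else 0))
               (fun V => F V + (if V == S then m else 0)).
Proof.
move=> [F_ge0 phiE] LS m_ge0; split=> [V LV|x].
  by case: eqP; rewrite ?addr0 ?addr_ge0 ?F_ge0.
rewrite big_split /= -phiE; congr (_ + _); case: ifP => Sx.
  by rewrite (bigD1 S) /= ?LS ?Sx // eqxx big1 ?addr0 // => V /andP[_ /negbTE->].
by rewrite big1 // => V /andP[_ xV]; case: eqP => // VS; rewrite -VS xV in Sx.
Qed.

Lemma M_1_upset_decomp phi : M_1 phi -> exists F, upset_decomp phi F.
Proof.
have [n] := ubnP #|[set x | 0 < phi x]|; elim: n phi => // n IH phi supp [phi_ge0 phi_mono].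
set S := [set x | 0 < phi x] in supp.
have phi0 x : x \notin S -> phi x = 0.
  by rewrite inE -leNgt => phi_le0; apply/eqP; rewrite eq_le phi_le0 phi_ge0.
have [S0|/set0Pn[x1 Sx1]] := eqVneq S set0.
  by exists (fun _ => 0); apply: upset_decomp0 => x; rewrite phi0 // S0 inE.
have [x0 Sx0 x0_min] := arg_minP phi Sx1; have {}Sx0 : x0 \in S := Sx0.
set m := phi x0 in x0_min; have m_gt0 : 0 < m by move: Sx0; rewrite inE.
have LS : in_calL S.
  apply/andP; split; last by apply/set0Pn; exists x0.
  apply: closed_is_upset => x y; rewrite !inE => phi_x xy.
  exact: lt_le_trans (phi_mono _ _ xy).
pose phi' x := phi x - (if x \in S then m else 0).
have M1phi' : M_1 phi'.
  split=> [x|x y xy]; rewrite /phi'.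
    by case: ifP => Sx; rewrite ?subr0 ?subr_ge0 ?x0_min.
  case: ifP => Sx; first by rewrite (mem_upset (proj1 (andP LS)) Sx xy) lerD2r phi_mono.
  by rewrite phi0 ?Sx // sub0r oppr0; case: ifP => Sy; rewrite ?subr0 ?subr_ge0 ?x0_min.
have supp' : (#|[set x | (0 < phi' x)%R]| < n)%N.
  rewrite ltnS in supp; apply: (leq_trans _ supp).
  rewrite (cardsD1 x0 S) Sx0 add1n ltnS subset_leq_card //.
  apply/subsetP => x; rewrite !inE /phi'; have [->|x_neq] /= := eqVneq x x0.
    by rewrite Sx0 /m subrr ltxx.
  move=> pos; apply: lt_le_trans pos _; rewrite lerBlDr lerDl.
  by case: ifP => _; rewrite // ltW.
have [F' decomp'] := IH phi' supp' M1phi'.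
have [F_ge0 phiE] := upset_decompD decomp' LS (ltW m_gt0).
by eexists; split=> [|x]; [apply: F_ge0 | rewrite -phiE /phi' subrK].
Qed.

End UpSets.

Section Indicators.
Variables (R : pzRingType) (I : finType).

Lemma sum_indicator_mull (P : pred I) (f : I -> R) :
  \sum_i (P i)%:R * f i = \sum_(i | P i) f i.
Proof.
by rewrite [RHS]big_mkcond; apply: eq_bigr => i _; case: (P i); rewrite ?mul1r ?mul0r.
Qed.

Lemma sum_indicator_mulr (P : pred I) (f : I -> R) :
  \sum_i f i * (P i)%:R = \sum_(i | P i) f i.
Proof.
by rewrite [RHS]big_mkcond; apply: eq_bigr => i _; case: (P i); rewrite ?mulr1 ?mulr0.
Qed.

End Indicators.

Lemma big_unit (R : Type) (idx : R) (op : Monoid.law idx) (F : unit -> R) :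
  \big[op/idx]_i F i = F tt.
Proof. by rewrite (big_pred1 tt) // => -[]. Qed.

Section StrongDuality.
Variables (d : Order.disp_t) (T : finLatticeType d) (R : realType).
Variables (phi : T -> R) (g : {set T} -> R).

(* Unknowns: a weight F V for every set V, and r x for every point x. *)
Definition lp_var := ({set T} + T)%type.

(* Rows: F V >= 0; the two halves of phi x = \sum_(V in calL, x \in V) F V;
   the constraints of S_feasible; and the reversed duality gap
   \sum_V F V * g V <= S_obj phi r. *)
Definition lp_row := (({set T} + T) + ((T + {set T}) + unit))%type.

Definition lp_A (i : lp_row) (j : lp_var) : R :=
  match i, j with
  | inl (inl V), inl W => - (W == V)%:R
  | inl (inr x), inl W => (in_calL W && (x \in W))%:R
  | inr (inl (inl x)), inl W => - (in_calL W && (x \in W))%:R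
  | inr (inl (inr V)), inr y => (in_calL V && (y \in V))%:R
  | inr (inr _), inl W => (in_calL W)%:R * g W
  | inr (inr _), inr y => - phi y
  | _, _ => 0
  end.

Definition lp_b (i : lp_row) : R :=
  match i with
  | inl (inl _) => 0
  | inl (inr x) => phi x
  | inr (inl (inl x)) => - phi x
  | inr (inl (inr V)) => (in_calL V)%:R * g V
  | inr (inr _) => 0
  end.

Lemma lp_solution (z : lp_var -> R) :
  (forall i, \sum_j lp_A i j * z j <= lp_b i) ->
  [/\ upset_decomp phi (fun V => z (inl V)), S_feasible g (fun x => z (inr x))
    & \sum_(V | in_calL V) z (inl V) * g V <= S_obj phi (fun x => z (inr x))].
Proof.
move=> zP.
have row i : \sum_W lp_A i (inl W) * z (inl W) + \sum_y lp_A i (inr y) * z (inr y) <= lp_b i.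
  by have := zP i; rewrite big_sumType.
have sum0 (I : finType) (f : I -> R) : \sum_i 0 * f i = 0.
  by rewrite big1 // => i _; rewrite mul0r.
split; [split=> [V _|x] | move=> V LV |].
- have := row (inl (inl V)); rewrite /= sum0 addr0.
  by under eq_bigr do rewrite mulNr; rewrite sumrN sum_indicator_mull big_pred1_eq oppr_le0.
- apply/eqP; rewrite eq_le; apply/andP; split.
    have := row (inr (inl (inl x))); rewrite /= sum0 addr0.
    by under eq_bigr do rewrite mulNr; rewrite sumrN sum_indicator_mull lerN2.
  by have := row (inl (inr x)); rewrite /= sum0 addr0 sum_indicator_mull.
- by have := row (inr (inl (inr V))); rewrite /= sum0 add0r sum_indicator_mull LV mul1r.
- have := row (inr (inr tt)); rewrite /=.
  under eq_bigr do rewrite -mulrA; under [X in _ + X]eq_bigr do rewrite mulNr.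
  rewrite sum_indicator_mull sumrN subr_le0 /S_obj => gap.
  by under eq_bigr do rewrite mulrC; under [X in _ <= X]eq_bigr do rewrite mulrC.
Qed.

Lemma sum_lp_row (f : lp_row -> R) : \sum_i f i =
  \sum_V f (inl (inl V)) + \sum_x f (inl (inr x)) +
  (\sum_x f (inr (inl (inl x))) + \sum_V f (inr (inl (inr V))) + f (inr (inr tt))).
Proof. by rewrite !big_sumType big_unit. Qed.

Lemma certificate_gap_le F0 (rho : T -> R) (mu nu : {set T} -> R) (ta : R) :
  upset_decomp phi F0 -> 0 <= ta -> (forall V, 0 <= mu V) -> (forall V, 0 <= nu V) ->
  (forall W, in_calL W -> \sum_(x in W) rho x = ta * g W - mu W) ->
  (forall y, \sum_(V | in_calL V && (y \in V)) nu V = ta * phi y) ->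
  S_obj phi rho <= \sum_(V | in_calL V) nu V * g V.
Proof.
move=> decF0 ta_ge0 mu_ge0 nu_ge0 rhoE nuE.
have rho_feas : S_feasible (fun V => ta * g V) rho.
  by move=> V LV; rewrite rhoE // lerBlDr lerDl.
have [ta0|ta_gt0] : ta = 0 \/ 0 < ta.
  by move: ta_ge0; rewrite le_eqVlt eq_sym => /orP[/eqP|]; [left|right].
- have nu0 V : in_calL V -> nu V = 0.
    move=> LV; have /set0Pn[y Vy] := proj2 (andP LV).
    have := nuE y; rewrite ta0 mul0r => /psumr_eq0P; apply=> [U _|]; first exact: nu_ge0.
    by rewrite LV Vy.
  rewrite big1 => [|V LV]; last by rewrite nu0 ?mul0r.
  have <- : \sum_(V | in_calL V) F0 V * (ta * g V) = 0.
    by apply: big1 => V _; rewrite ta0 mul0r mulr0.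
  exact: S_obj_le_decomp decF0 rho_feas.
- have nu_decomp : upset_decomp (fun x => ta * phi x) nu.
    by split=> [V _|x]; rewrite ?nuE ?nu_ge0.
  have := S_obj_le_decomp nu_decomp rho_feas; rewrite /S_obj.
  under eq_bigr do rewrite mulrCA; under [X in _ <= X]eq_bigr do rewrite mulrCA.
  by rewrite -!big_distrr ler_pM2l.
Qed.

Lemma lp_certificate_ge0 F0 (l : lp_row -> R) : upset_decomp phi F0 ->
  (forall i, 0 <= l i) -> (forall j, \sum_i l i * lp_A i j = 0) ->
  0 <= \sum_i l i * lp_b i.
Proof.
move=> decF0 l_ge0 col.
pose rho x := l (inr (inl (inl x))) - l (inl (inr x)).
pose nu V := l (inr (inl (inr V))).
pose ta := l (inr (inr tt)).
have sum0 (I : finType) (f : I -> R) : \sum_i f i * 0 = 0.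
  by rewrite big1 // => i _; rewrite mulr0.
have rhoE W : in_calL W -> \sum_(x in W) rho x = ta * g W - l (inl (inl W)).
  move=> LW; have := col (inl W); rewrite sum_lp_row /= LW /= sum0 addr0 mul1r.
  under eq_bigr do rewrite mulrN; under [X in _ + (X + _)]eq_bigr do rewrite mulrN.
  rewrite !sumrN !sum_indicator_mulr (big_pred1 W) => [|V]; last by rewrite /= eq_sym.
  by rewrite sumrB /ta => col0; lra.
have nuE y : \sum_(V | in_calL V && (y \in V)) nu V = ta * phi y.
  have := col (inr y); rewrite sum_lp_row /= !sum0 sum_indicator_mulr mulrN.
  by rewrite /ta; lra.
have objE : \sum_i l i * lp_b i = \sum_(V | in_calL V) nu V * g V - S_obj phi rho.
  rewrite sum_lp_row /= sum0 mulr0 addr0 /S_obj.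
  under [X in _ + (_ + X)]eq_bigr do rewrite mulrCA.
  under [X in _ + (X + _)]eq_bigr do rewrite mulrN.
  under [X in _ = _ - X]eq_bigr do rewrite mulrBl.
  by rewrite sum_indicator_mull sumrN sumrB; lra.
rewrite objE subr_ge0.
by apply: certificate_gap_le decF0 _ _ _ rhoE nuE => [|V|V]; apply: l_ge0.
Qed.

Lemma strong_duality : M_1 phi -> exists F r,
  [/\ upset_decomp phi F, S_feasible g r & \sum_(V | in_calL V) F V * g V <= S_obj phi r].
Proof.
move=> /M_1_upset_decomp[F0 decF0].
have [[z /lp_solution[]]|[l [l_ge0 col obj]]] := farkas lp_A lp_b.
  by exists (fun V => z (inl V)), (fun x => z (inr x)).
by have := lp_certificate_ge0 decF0 l_ge0 col; rewrite leNgt obj.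
Qed.

End StrongDuality.

Unset Implicit Arguments. Set Strict Implicit.

Theorem theorem3p6 (d : Order.disp_t) (T : finLatticeType d) (R : realType)
    (phi : T -> R) (hphi : M_1 phi) (g : {set T} -> R) :
  exists v : R,
    ((exists Phi, B_feasible phi Phi /\ Phi_app Phi g = v) /\
     (forall Phi, B_feasible phi Phi -> v <= Phi_app Phi g)) /\
    ((exists r : T -> R, S_feasible g r /\ S_obj phi r = v) /\
     (forall r : T -> R, S_feasible g r -> S_obj phi r <= v)).
Proof.
have [F [r [decF r_feas gap]]] := strong_duality g hphi.
exists (\sum_(V | in_calL V) F V * g V); split; split.
- by exists (zeta F); split; [apply: zeta_B_feasible | apply: Phi_app_zeta].
- move=> Phi /B_feasible_decomp decPhi.
  exact: le_trans gap (S_obj_le_decomp decPhi r_feas).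
- by exists r; split=> //; apply/le_anti; rewrite gap S_obj_le_decomp.
- by move=> r' r'_feas; apply: S_obj_le_decomp decF r'_feas.
Qed.
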